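(* Let $a,b\ge 0$ and $c>0$, and let $q:\mathbb R^M\to\mathbb R_+$ be a positive semidefinite quadratic form. Then the function $x\mapsto\left(a-b\,e^{-b\,q(x)}\right)e^{-c\,q(x)}$ is log-concave on $\mathbb R^M$ whenever $a\ge\frac{b^2+2bc}{c}$.
   Context: A function $f:\mathbb R^M\to\mathbb R_{\ge 0}$ is log-concave if $\log f$ is concave. *)

From HB Require Import structures.
From mathcomp Require Import all_boot all_order all_algebra.
From mathcomp Require Import all_classical all_reals all_analysis.
Set Implicit Arguments. Unset Strict Implicit. Unset Printing Implicit Defensive.
Import Order.TTheory GRing.Theory Num.Theory.
Local Open Scope ring_scope.

Definition quad_form (R : realType) (M : nat) (A : 'M[R]_M) (x : 'rV[R]_M) : R :=
  (x *m A *m x^T) 0 0.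

Definition psd_form (R : realType) (M : nat) (A : 'M[R]_M) : Prop :=
  forall x : 'rV[R]_M, 0 <= quad_form A x.

Definition elog (R : realType) (r : R) : \bar R :=
  if 0 < r then (ln r)%:E else -oo%E.

Definition concave_ext (R : realType) (M : nat) (g : 'rV[R]_M -> \bar R) : Prop :=
  forall (x y : 'rV[R]_M) (t : R), 0 < t < 1 ->
    let z := t *: x + (1 - t) *: y in
    (t%:E * g x + (1 - t)%:E * g y <= g z)%E.

Definition log_concave (R : realType) (M : nat) (f : 'rV[R]_M -> R) : Prop :=
  (forall x, 0 <= f x) /\ concave_ext (fun x => elog (f x)).

From HB Require Import structures.
From mathcomp Require Import all_boot all_order all_algebra.
From mathcomp Require Import all_classical all_reals all_analysis.
From mathcomp Require Import ring lra.
Import Order.TTheory GRing.Theory Num.Theory.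
Set Implicit Arguments. Unset Strict Implicit. Unset Printing Implicit Defensive.
Local Open Scope ring_scope.

(* With [phi u := (a - b e^{-bu}) e^{-cu}], the function is [phi \o q], and
   [q] is convex and nonnegative, so it suffices that [ln \o phi] is concave
   and nonincreasing on [0, +oo).  Concavity holds because
   [ln phi u = ln (a - b e^{-bu}) - c u] with [a - b e^{-bu}] concave and
   positive.  Monotonicity is where [b^2 + b c <= a c] enters: it balances
   the growth of [a - b e^{-bu}] against the decay of [e^{-cu}], via the
   estimates [1 - e^{-bd} <= b d] and [c d e^{-cd} <= 1 - e^{-cd}]. *)

Lemma quad_form_convex_gap (R : realType) (M : nat) (A : 'M[R]_M) (t : R)
    (x y : 'rV[R]_M) :
  t * quad_form A x + (1 - t) * quad_form A y
    - quad_form A (t *: x + (1 - t) *: y)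
  = t * (1 - t) * quad_form A (x - y).
Proof.
rewrite /quad_form !linearD !linearN /= !linearZ /=.
rewrite !mulmxDl !mulNmx -!scalemxAl !mxE.
ring.
Qed.

Lemma psd_quad_form_convex (R : realType) (M : nat) (A : 'M[R]_M) (t : R)
    (x y : 'rV[R]_M) :
  psd_form A -> 0 <= t <= 1 ->
  quad_form A (t *: x + (1 - t) *: y)
    <= t * quad_form A x + (1 - t) * quad_form A y.
Proof.
move=> psdA /andP[t0 t1]; rewrite -subr_ge0 quad_form_convex_gap.
by apply: mulr_ge0 => //; apply: mulr_ge0; lra.
Qed.

Definition concave_on_nneg (R : realType) (h : R -> R) : Prop :=
  forall t u v : R, 0 <= t <= 1 -> 0 <= u -> 0 <= v ->
    t * h u + (1 - t) * h v <= h (t * u + (1 - t) * v).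

Lemma concave_nonincreasing_comp_convex (R : realType) (V : lmodType R)
    (h : R -> R) (q : V -> R) :
  concave_on_nneg h -> (forall u v, 0 <= u -> u <= v -> h v <= h u) ->
  (forall x, 0 <= q x) ->
  (forall t x y, 0 <= t <= 1 -> q (t *: x + (1 - t) *: y) <= t * q x + (1 - t) * q y) ->
  forall t x y, 0 <= t <= 1 ->
    t * h (q x) + (1 - t) * h (q y) <= h (q (t *: x + (1 - t) *: y)).
Proof.
move=> h_conc h_nincr q_ge0 q_conv t x y t01.
apply: le_trans (h_conc _ _ _ t01 (q_ge0 x) (q_ge0 y)) _.
by apply: h_nincr; [exact: q_ge0 | exact: q_conv].
Qed.

Lemma expR_convex_comb (R : realType) (t x y : R) : 0 <= t <= 1 ->
  expR (t * x + (1 - t) * y) <= t * expR x + (1 - t) * expR y.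
Proof.
case/andP=> t0 t1.
by have := @convex_expR R (Itv01 t0 t1) x y; rewrite !convRE.
Qed.

Lemma ln_concave_comb (R : realType) (t x y : R) : 0 <= t <= 1 -> 0 < x -> 0 < y ->
  t * ln x + (1 - t) * ln y <= ln (t * x + (1 - t) * y).
Proof.
case/andP=> t0 t1 x0 y0.
by have := @concave_ln R (Itv01 t0 t1) x y x0 y0; rewrite !convRE.
Qed.

Lemma expR_decay_gap (R : realType) (a b c d : R) :
  0 <= b -> 0 < c -> b ^+ 2 + b * c <= a * c -> 0 <= d ->
  b * (1 - expR (- ((b + c) * d))) <= a * (1 - expR (- (c * d))).
Proof.
move=> b0 c0 habc d0; set w := expR (- (c * d)).
have w0 : 0 < w := expR_gt0 _.
have w1 : w <= 1 by rewrite expR_le1 oppr_le0 mulr_ge0 // ltW.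
have -> : expR (- ((b + c) * d)) = expR (- (b * d)) * w.
  by rewrite -expRD; congr expR; ring.
have bd_bound : 1 - expR (- (b * d)) <= b * d.
  by have := expR_ge1Dx (- (b * d)); lra.
have cdw_bound : c * d * w <= 1 - w.
  have := ler_wpM2l (ltW w0) (expR_ge1Dx (c * d)).
  by rewrite /w -expRD addNr expR0; lra.
have bd0 : 0 <= b * d by exact: mulr_ge0.
rewrite -(ler_pM2l c0).
have -> : c * (b * (1 - expR (- (b * d)) * w))
          = b * c * (1 - w) + b * c * w * (1 - expR (- (b * d))) by ring.
have gap1 : b * c * w * (1 - expR (- (b * d))) <= b * c * w * (b * d).
  by apply: ler_wpM2l bd_bound; rewrite !mulr_ge0 // ltW.
have gap2 : b * c * w * (b * d) <= b ^+ 2 * (1 - w).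
  have -> : b * c * w * (b * d) = b ^+ 2 * (c * d * w) by ring.
  by apply: ler_wpM2l => //; exact: sqr_ge0.
have gap3 : (b ^+ 2 + b * c) * (1 - w) <= a * c * (1 - w).
  by apply: ler_wpM2r => //; rewrite subr_ge0.
lra.
Qed.

Definition profile (R : realType) (a b c u : R) : R :=
  (a - b * expR (- (b * u))) * expR (- (c * u)).

Section Profile.
Variables (R : realType) (a b c : R).

Let decay_le1 (u : R) : 0 <= b -> 0 <= u -> expR (- (b * u)) <= 1.
Proof. by move=> b0 u0; rewrite expR_le1 oppr_le0; exact: mulr_ge0. Qed.

Let factor_lower (u : R) : 0 <= b -> 0 <= u -> a - b <= a - b * expR (- (b * u)).
Proof. by move=> b0 u0; rewrite lerD2l lerN2 ler_piMr // decay_le1. Qed.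

Lemma profile_ge0 (u : R) : 0 <= b -> b <= a -> 0 <= u -> 0 <= profile a b c u.
Proof.
move=> b0 ba u0; apply: mulr_ge0; last exact: expR_ge0.
by apply: le_trans (factor_lower b0 u0); rewrite subr_ge0.
Qed.

Lemma profile_gt0 (u : R) : 0 <= b -> b < a -> 0 <= u -> 0 < profile a b c u.
Proof.
move=> b0 ba u0; apply: mulr_gt0; last exact: expR_gt0.
by apply: lt_le_trans (factor_lower b0 u0); rewrite subr_gt0.
Qed.

Lemma profile_nonincreasing (u v : R) :
  0 <= b -> 0 < c -> b ^+ 2 + b * c <= a * c -> 0 <= u -> u <= v ->
  profile a b c v <= profile a b c u.
Proof.
move=> b0 c0 habc u0 uv; set d := v - u; set s := expR (- (b * u)).
have d0 : 0 <= d by rewrite subr_ge0.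
have split_exp (k : R) : expR (- (k * v)) = expR (- (k * u)) * expR (- (k * d)).
  by rewrite -expRD; congr expR; rewrite /d; ring.
rewrite -subr_ge0.
have -> : profile a b c u - profile a b c v = expR (- (c * u)) *
    (a * (1 - expR (- (c * d))) - b * s * (1 - expR (- ((b + c) * d)))).
  have -> : expR (- ((b + c) * d)) = expR (- (b * d)) * expR (- (c * d)).
    by rewrite -expRD; congr expR; ring.
  by rewrite /profile !split_exp /s; ring.
have s0 : 0 <= s := expR_ge0 _.
have s1 : s <= 1 := decay_le1 b0 u0.
have E1 : expR (- ((b + c) * d)) <= 1.
  by rewrite expR_le1 oppr_le0 mulr_ge0 // addr_ge0 // ltW.
apply: mulr_ge0; first exact: expR_ge0.
have := expR_decay_gap b0 c0 habc d0.
have : 0 <= b * (1 - s) * (1 - expR (- ((b + c) * d))).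
  by apply: mulr_ge0; [apply: mulr_ge0 |]; lra.
lra.
Qed.

Lemma ln_profile_concave :
  0 <= b -> b < a -> concave_on_nneg (fun u => ln (profile a b c u)).
Proof.
move=> b0 ba t u v t01 u0 v0; have /andP[t0 t1] := t01.
set m := t * u + (1 - t) * v.
have m0 : 0 <= m by apply: addr_ge0; apply: mulr_ge0; lra.
pose g w := a - b * expR (- (b * w)).
have g_lower w : 0 <= w -> a - b <= g w := factor_lower b0.
have g_gt0 w : 0 <= w -> 0 < g w.
  by move=> w0; apply: lt_le_trans (g_lower w w0); rewrite subr_gt0.
have ln_profile w : 0 <= w -> ln (profile a b c w) = ln (g w) - c * w.
  by move=> w0; rewrite /profile lnM ?posrE ?expR_gt0 ?g_gt0 // expRK.
have g_concave : t * g u + (1 - t) * g v <= g m.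
  have := ler_wpM2l b0 (expR_convex_comb (- (b * u)) (- (b * v)) t01).
  have -> : t * - (b * u) + (1 - t) * - (b * v) = - (b * m) by rewrite /m; ring.
  rewrite /g; lra.
have comb_gt0 : 0 < t * g u + (1 - t) * g v.
  apply: lt_le_trans (_ : 0 < t * (a - b) + (1 - t) * (a - b)) _; first lra.
  by apply: lerD; apply: ler_wpM2l; rewrite ?subr_ge0 ?g_lower.
have ln_g_concave : ln (t * g u + (1 - t) * g v) <= ln (g m).
  by rewrite ler_ln ?posrE ?g_gt0.
have := ln_concave_comb t01 (g_gt0 u u0) (g_gt0 v v0).
rewrite !ln_profile // /m; lra.
Qed.

End Profile.

Theorem lemma2 (R : realType) (M : nat) (A : 'M[R]_M) (a b c : R) :
  0 <= a -> 0 <= b -> 0 < c -> psd_form A ->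
  (b ^+ 2 + 2 * b * c) / c <= a ->
  log_concave (fun x : 'rV[R]_M =>
    (a - b * expR (- (b * quad_form A x))) * expR (- (c * quad_form A x))).
Proof.
move=> a0 b0 c0 psdA.
rewrite ler_pdivrMr // => habc.
have b2a : 2 * b <= a by rewrite -(ler_pM2r c0); nra.
change (log_concave (fun x => profile a b c (quad_form A x))).
split=> [x | x y t /andP[t0 t1] /=]; first by apply: profile_ge0 => //; lra.
have [a_gt0 | a_le0] := ltP 0 a; last first.
  have [-> ->] : a = 0 /\ b = 0 by lra.
  rewrite /elog /profile !(mul0r, subr0) ltxx mulrNy gtr0_sg // mul1e addNye.
  exact: leNye.
have ba : b < a by lra.
rewrite /elog !profile_gt0 // -!EFinM -EFinD lee_fin.
apply: (concave_nonincreasing_comp_convex (h := fun u => ln (profile a b c u)) (q := quad_form A)).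
- exact: ln_profile_concave.
- move=> u v u0 uv; rewrite ler_ln ?posrE ?profile_gt0 //; last exact: le_trans uv.
  by apply: profile_nonincreasing => //; have := mulr_ge0 b0 (ltW c0); lra.
- exact: psdA.
- by move=> t' x' y'; exact: psd_quad_form_convex.
- by apply/andP; split; lra.
Qed.
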